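(* Let $f:\Sigma\to\mathbb{S}^4_1$ be a non-isotropic conformal marginally trapped immersion with null Gauss map $G:\Sigma\to\mathbb{S}^3$. Then $G$ is an envelope of the sphere congruence determined by $f$: every local lift $W$ of $G$ satisfies $\langle f,W\rangle=0$ and $\langle f,dW\rangle=0$. Moreover, the central sphere congruence of $G$ coincides with the one determined by $\pm f$, i.e. $V=f^\perp$ at every point, where $V=\mathrm{span}\{X,X_z,X_{\bar z},X_{z\bar z}\}$ for any local lift $X$ of $G$.
   Context: $\mathbb{R}^5_1$ is $\mathbb{R}^5$ with Lorentz product $\langle x,y\rangle=x_0y_0+x_1y_1+x_2y_2+x_3y_3-x_4y_4$, extended complex-bilinearly; $\mathbb{S}^4_1=\{\langle x,x\rangle=1\}$; $X$ future pointing means $\langle X,e_4\rangle<0$; $\mathcal L$ is the light cone and $\mathbb{S}^3\cong P(\mathcal L)$. $f:\Sigma\to\mathbb{S}^4_1$ is a conformal spacelike immersion, $\langle f_z,f_{\bar z}\rangle=e^{2u}$. A positively oriented orthonormal frame $\{N_1,N_2\}$ of the oriented Lorentzian normal bundle has $\langle N_1,N_1\rangle=1$, $\langle N_2,N_2\rangle=-1$, $\langle N_1,N_2\rangle=0$, $N_2$ future pointing and the orientation of $\nu(f)$. $\xi_1=\langle f_{zz},N_1\rangle$, $\xi_2=-\langle f_{zz},N_2\rangle$. $\mathbf H$ is defined by $f_{z\bar z}=-e^{2u}f+e^{2u}\mathbf H$; marginally trapped means $\langle\mathbf H,\mathbf H\rangle=0$, orientation chosen with $\mathbf H=h(N_1+N_2)$.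 $f$ is non-isotropic if $\langle f_{zz},f_{zz}\rangle=\xi_1^2-\xi_2^2$ never vanishes (then $\xi_1\ne\xi_2$ everywhere and $G$ is a conformal immersion). The null Gauss map is $G(x)=[N_1(x)+N_2(x)]$; a local lift of $G$ is a map $W$ into $\mathcal L$ with $[W]=G$. The sphere congruence determined by $f$ assigns to $x$ the $2$-sphere $P(f(x)^\perp\cap\mathcal L)\subset\mathbb{S}^3$; the central sphere congruence of $G$ is the rank 4 bundle $V$ (spheres $P(V_x\cap\mathcal L)$). *)

From Stdlib Require Import Reals ClassicalEpsilon.
Open Scope R_scope.

Record V5 := mkV5 { c0 : R; c1 : R; c2 : R; c3 : R; c4 : R }.

Definition vadd (a b : V5) : V5 :=
  mkV5 (c0 a + c0 b) (c1 a + c1 b) (c2 a + c2 b) (c3 a + c3 b) (c4 a + c4 b).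
Definition vscal (t : R) (a : V5) : V5 :=
  mkV5 (t * c0 a) (t * c1 a) (t * c2 a) (t * c3 a) (t * c4 a).
Definition vzero : V5 := mkV5 0 0 0 0 0.

Definition ldot (a b : V5) : R :=
  c0 a * c0 b + c1 a * c1 b + c2 a * c2 b + c3 a * c3 b - c4 a * c4 b.

Definition e4 : V5 := mkV5 0 0 0 0 1.

Definition future_pointing (X : V5) : Prop := ldot X e4 < 0.

Definition in_light_cone (X : V5) : Prop := X <> vzero /\ ldot X X = 0.

(* [a] = [b] in the projectivized light cone *)
Definition same_proj_point (a b : V5) : Prop :=
  a <> vzero /\ b <> vzero /\ exists t : R, t <> 0 /\ a = vscal t b.

Record C := mkC { re : R; im : R }.
Definition C0 : C := mkC 0 0.

(* complex vectors  A + i B  in C^5 *)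
Record CV := mkCV { rv : V5; iv : V5 }.
Definition creal (a : V5) : CV := mkCV a vzero.

(* complex-bilinear extension of the Lorentz product *)
Definition cdot (a b : CV) : C :=
  mkC (ldot (rv a) (rv b) - ldot (iv a) (iv b))
      (ldot (rv a) (iv b) + ldot (iv a) (rv b)).

Definition dxr (g : R -> R -> R) (x y : R) : R :=
  epsilon (inhabits 0) (fun l => derivable_pt_lim (fun t => g t y) x l).
Definition dyr (g : R -> R -> R) (x y : R) : R :=
  epsilon (inhabits 0) (fun l => derivable_pt_lim (fun t => g x t) y l).

Definition compmap (F : R -> R -> V5) (k : V5 -> R) : R -> R -> R :=
  fun x y => k (F x y).

Definition Pdx (F : R -> R -> V5) (x y : R) : V5 :=
  mkV5 (dxr (compmap F c0) x y) (dxr (compmap F c1) x y) (dxr (compmap F c2) x y)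
       (dxr (compmap F c3) x y) (dxr (compmap F c4) x y).
Definition Pdy (F : R -> R -> V5) (x y : R) : V5 :=
  mkV5 (dyr (compmap F c0) x y) (dyr (compmap F c1) x y) (dyr (compmap F c2) x y)
       (dyr (compmap F c3) x y) (dyr (compmap F c4) x y).

(* d/dz = (d/dx - i d/dy)/2 and d/dzbar = (d/dx + i d/dy)/2 on C^5-valued maps *)
Definition dzC (G : R -> R -> CV) (x y : R) : CV :=
  let A := fun a b => rv (G a b) in let B := fun a b => iv (G a b) in
  mkCV (vscal (/2) (vadd (Pdx A x y) (Pdy B x y)))
       (vscal (/2) (vadd (Pdx B x y) (vscal (-1) (Pdy A x y)))).
Definition dzbC (G : R -> R -> CV) (x y : R) : CV :=
  let A := fun a b => rv (G a b) in let B := fun a b => iv (G a b) in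
  mkCV (vscal (/2) (vadd (Pdx A x y) (vscal (-1) (Pdy B x y))))
       (vscal (/2) (vadd (Pdx B x y) (Pdy A x y))).
Definition dz (F : R -> R -> V5) : R -> R -> CV := dzC (fun a b => creal (F a b)).
Definition dzb (F : R -> R -> V5) : R -> R -> CV := dzbC (fun a b => creal (F a b)).

Definition open2 (U : R -> R -> Prop) : Prop :=
  forall x y, U x y -> exists e, e > 0 /\
    forall x' y', (x' - x) ^ 2 + (y' - y) ^ 2 < e ^ 2 -> U x' y'.

Definition subset2 (U U' : R -> R -> Prop) : Prop := forall x y, U x y -> U' x y.

Definition cont2_at (g : R -> R -> R) (x y : R) : Prop :=
  forall eps, eps > 0 -> exists d, d > 0 /\
    forall x' y', (x' - x) ^ 2 + (y' - y) ^ 2 < d ^ 2 -> Rabs (g x' y' - g x y) < eps.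

Fixpoint Ck_on (k : nat) (U : R -> R -> Prop) (g : R -> R -> R) : Prop :=
  match k with
  | O => forall x y, U x y -> cont2_at g x y
  | S k' =>
      (forall x y, U x y -> cont2_at g x y) /\
      (forall x y, U x y -> derivable_pt_lim (fun t => g t y) x (dxr g x y)) /\
      (forall x y, U x y -> derivable_pt_lim (fun t => g x t) y (dyr g x y)) /\
      Ck_on k' U (dxr g) /\ Ck_on k' U (dyr g)
  end.

Definition smooth_on (U : R -> R -> Prop) (F : R -> R -> V5) : Prop :=
  forall k, Ck_on k U (compmap F c0) /\ Ck_on k U (compmap F c1) /\
            Ck_on k U (compmap F c2) /\ Ck_on k U (compmap F c3) /\
            Ck_on k U (compmap F c4).

Definition conformal_spacelike_immersion_S41 (U : R -> R -> Prop) (f : R -> R -> V5) : Prop :=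
  smooth_on U f /\
  forall x y, U x y ->
    ldot (f x y) (f x y) = 1 /\
    ldot (Pdx f x y) (Pdx f x y) > 0 /\
    ldot (Pdx f x y) (Pdx f x y) = ldot (Pdy f x y) (Pdy f x y) /\
    ldot (Pdx f x y) (Pdy f x y) = 0.

Definition e2u (f : R -> R -> V5) (x y : R) : R := re (cdot (dz f x y) (dzb f x y)).

Definition normal_frame (U : R -> R -> Prop) (f N1 N2 : R -> R -> V5) : Prop :=
  smooth_on U N1 /\ smooth_on U N2 /\
  forall x y, U x y ->
    ldot (N1 x y) (f x y) = 0 /\ ldot (N1 x y) (Pdx f x y) = 0 /\ ldot (N1 x y) (Pdy f x y) = 0 /\
    ldot (N2 x y) (f x y) = 0 /\ ldot (N2 x y) (Pdx f x y) = 0 /\ ldot (N2 x y) (Pdy f x y) = 0 /\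
    ldot (N1 x y) (N1 x y) = 1 /\ ldot (N2 x y) (N2 x y) = -1 /\ ldot (N1 x y) (N2 x y) = 0 /\
    future_pointing (N2 x y).

Definition is_mean_curvature (U : R -> R -> Prop) (f H : R -> R -> V5) : Prop :=
  forall x y, U x y ->
    dzbC (dz f) x y =
      creal (vadd (vscal (- e2u f x y) (f x y)) (vscal (e2u f x y) (H x y))).

Definition non_isotropic (U : R -> R -> Prop) (f : R -> R -> V5) : Prop :=
  forall x y, U x y -> cdot (dzC (dz f) x y) (dzC (dz f) x y) <> C0.

(* null Gauss map G = [N1 + N2];  W is a local lift of G on U' *)
Definition local_lift_of_null_gauss (U' : R -> R -> Prop) (N1 N2 W : R -> R -> V5) : Prop :=
  smooth_on U' W /\
  forall x y, U' x y ->
    in_light_cone (W x y) /\ same_proj_point (W x y) (vadd (N1 x y) (N2 x y)).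

(* V_p = span{X, X_z, X_zbar, X_{z zbar}} intersected with R^5
       = real span {X, X_x, X_y, X_xx + X_yy}  (X_{z zbar} = (X_xx + X_yy)/4) *)
Definition in_central_span (X : R -> R -> V5) (x y : R) (v : V5) : Prop :=
  exists a b c d : R,
    v = vadd (vadd (vscal a (X x y)) (vscal b (Pdx X x y)))
             (vadd (vscal c (Pdy X x y))
                   (vscal d (vadd (Pdx (Pdx X) x y) (Pdy (Pdy X) x y)))).

From Pilot Require Import Defs.
From Stdlib Require Import Reals ClassicalEpsilon FunctionalExtensionality Lra Psatz.
From Coquelicot Require Coquelicot.
From mathcomp Require all_boot all_algebra Rstruct.
Open Scope R_scope.

(* The lift W is a multiple of N1 + N2, hence orthogonal to f, f_x and f_y; differentiating
   <f, W> = 0 and using <f_x, W> = <f_y, W> = 0 gives <f, dW> = 0.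
   For the central sphere congruence, expand in the frame f, f_x, f_y, N1, N2.  With
   p = <f_xx, W> and q = <f_xy, W>, the vectors W_x, W_y are orthogonal to f, W and each other,
   with |W_x|^2 = |W_y|^2 = (p^2 + q^2) / |f_x|^2; moreover <W, W_xx + W_yy> = -(|W_x|^2 + |W_y|^2)
   and <f, W_xx + W_yy> = <f_xx + f_yy, W> = 0 by the mean curvature equation.  Non-isotropy
   forces p^2 + q^2 <> 0, since <f_zz, f_zz> vanishes as soon as f_zz is orthogonal to the
   null vector N1 + N2.  So W, W_x, W_y, W_xx + W_yy are independent vectors of the
   four-dimensional space f^perp and span it. *)

Lemma ldotC a b : ldot a b = ldot b a.
Proof. destruct a, b; unfold ldot; simpl; ring. Qed.
Lemma ldotDl a b c : ldot (vadd a b) c = ldot a c + ldot b c.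
Proof. destruct a, b, c; unfold ldot; simpl; ring. Qed.
Lemma ldotDr a b c : ldot a (vadd b c) = ldot a b + ldot a c.
Proof. destruct a, b, c; unfold ldot; simpl; ring. Qed.
Lemma ldotZl k a b : ldot (vscal k a) b = k * ldot a b.
Proof. destruct a, b; unfold ldot; simpl; ring. Qed.
Lemma ldotZr k a b : ldot a (vscal k b) = k * ldot a b.
Proof. destruct a, b; unfold ldot; simpl; ring. Qed.

Ltac ldot_simpl := repeat rewrite ?ldotDl, ?ldotDr, ?ldotZl, ?ldotZr.
Ltac ldot_simpl_in H := repeat rewrite ?ldotDl, ?ldotDr, ?ldotZl, ?ldotZr in H.

Lemma ldot0l a : ldot vzero a = 0.
Proof. destruct a; unfold ldot; simpl; ring. Qed.

Lemma Rmult_eq0_reg_r a d : d <> 0 -> a * d = 0 -> a = 0.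
Proof. intros d_neq0 ad_0; destruct (Rmult_integral a d ad_0); [assumption | contradiction]. Qed.

Ltac vec_field :=
  unfold vadd, vscal, vzero; cbn [c0 Defs.c1 c2 c3 c4]; f_equal; field.

Definition lin5 (a1 a2 a3 a4 a5 : R) (e1 e2 e3 e4 e5 : V5) : V5 :=
  vadd (vadd (vadd (vadd (vscal a1 e1) (vscal a2 e2)) (vscal a3 e3)) (vscal a4 e4))
       (vscal a5 e5).

Section Coordinates.
Import all_boot all_algebra Rstruct GRing.Theory.
Local Open Scope ring_scope.

Definition coord (v : V5) (j : 'I_5) : R := nth 0 [:: c0 v; Defs.c1 v; c2 v; c3 v; c4 v] j.

Definition coord_mx (e1 e2 e3 e4 e5 : V5) : 'M[R]_5 :=
  \matrix_(i, j) coord (nth vzero [:: e1; e2; e3; e4; e5] i) j.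

Definition coef_row (a1 a2 a3 a4 a5 : R) : 'rV[R]_5 := \row_i nth 0 [:: a1; a2; a3; a4; a5] i.

Lemma coord_inj v w : (forall j, coord v j = coord w j) -> v = w.
Proof.
case: v w => [v0 v1 v2 v3 v4] [w0 w1 w2 w3 w4] E.
move: (E ord0) (E (@Ordinal 5 1 isT)) (E (@Ordinal 5 2 isT)) (E (@Ordinal 5 3 isT))
  (E (@Ordinal 5 4 isT)); rewrite /coord /= => -> -> -> -> -> //.
Qed.

Lemma coord_lin5 a1 a2 a3 a4 a5 e1 e2 e3 e4 e5 j :
  coord (lin5 a1 a2 a3 a4 a5 e1 e2 e3 e4 e5) j
  = (coef_row a1 a2 a3 a4 a5 *m coord_mx e1 e2 e3 e4 e5) 0 j.
Proof.
rewrite mxE !big_ord_recl big_ord0 !mxE.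
case: j => [[|[|[|[|[|j]]]]] Hj] //=; by rewrite /coord /= addr0 !addrA.
Qed.

Lemma coef_row_mx (u : 'rV[R]_5) :
  u = coef_row (u 0 ord0) (u 0 (@Ordinal 5 1 isT)) (u 0 (@Ordinal 5 2 isT))
               (u 0 (@Ordinal 5 3 isT)) (u 0 (@Ordinal 5 4 isT)).
Proof.
apply/rowP => -[[|[|[|[|[|j]]]]] Hj]; rewrite mxE //=; congr (u 0 _); exact: val_inj.
Qed.

(* Stated outside ring_scope, so that 0 is the Stdlib real zero. *)
Local Close Scope ring_scope.
Lemma lin5_spans e1 e2 e3 e4 e5 :
  (forall a1 a2 a3 a4 a5, lin5 a1 a2 a3 a4 a5 e1 e2 e3 e4 e5 = vzero ->
     a1 = 0 /\ a2 = 0 /\ a3 = 0 /\ a4 = 0 /\ a5 = 0) ->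
  forall v, exists a1 a2 a3 a4 a5, v = lin5 a1 a2 a3 a4 a5 e1 e2 e3 e4 e5.
Proof.
Local Open Scope ring_scope.
move=> free v; set M := coord_mx e1 e2 e3 e4 e5.
have free_row (u : 'rV[R]_5) : u *m M = 0 -> u = 0.
  rewrite [u]coef_row_mx => uM0.
  have /free[-> [-> [-> [-> ->]]]] : lin5 (u 0 ord0) (u 0 (@Ordinal 5 1 isT))
      (u 0 (@Ordinal 5 2 isT)) (u 0 (@Ordinal 5 3 isT)) (u 0 (@Ordinal 5 4 isT))
      e1 e2 e3 e4 e5 = vzero.
    apply: coord_inj => j; rewrite coord_lin5 uM0 mxE.
    by case: j => [[|[|[|[|[|j]]]]] Hj].
  by apply/rowP => j; rewrite !mxE; case: j => [[|[|[|[|[|j]]]]] Hj].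
have M_free : row_free M.
  rewrite -kermx_eq0; apply/eqP/row_matrixP => i; rewrite row0.
  by apply: free_row; rewrite -row_mul mulmx_ker row0.
have /submxP[D vD] : (\row_j coord v j <= M)%MS.
  by apply/submx_full; rewrite row_full_unit -row_free_unit.
exists (D 0 ord0), (D 0 (@Ordinal 5 1 isT)), (D 0 (@Ordinal 5 2 isT)),
  (D 0 (@Ordinal 5 3 isT)), (D 0 (@Ordinal 5 4 isT)).
by apply: coord_inj => j; rewrite coord_lin5 -coef_row_mx -vD mxE.
Qed.
End Coordinates.

Lemma ldot_lin5l a1 a2 a3 a4 a5 e1 e2 e3 e4 e5 w :
  ldot (lin5 a1 a2 a3 a4 a5 e1 e2 e3 e4 e5) w =
  a1 * ldot e1 w + a2 * ldot e2 w + a3 * ldot e3 w + a4 * ldot e4 w + a5 * ldot e5 w.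
Proof. unfold lin5; ldot_simpl; ring. Qed.

Definition orthogonal5 (e1 e2 e3 e4 e5 : V5) : Prop :=
  ldot e1 e2 = 0 /\ ldot e1 e3 = 0 /\ ldot e1 e4 = 0 /\ ldot e1 e5 = 0 /\
  ldot e2 e3 = 0 /\ ldot e2 e4 = 0 /\ ldot e2 e5 = 0 /\
  ldot e3 e4 = 0 /\ ldot e3 e5 = 0 /\ ldot e4 e5 = 0.

Lemma ldot_lin5_orthogonal a1 a2 a3 a4 a5 e1 e2 e3 e4 e5 v :
  orthogonal5 e1 e2 e3 e4 e5 -> v = lin5 a1 a2 a3 a4 a5 e1 e2 e3 e4 e5 ->
  ldot v e1 = a1 * ldot e1 e1 /\ ldot v e2 = a2 * ldot e2 e2 /\
  ldot v e3 = a3 * ldot e3 e3 /\ ldot v e4 = a4 * ldot e4 e4 /\ ldot v e5 = a5 * ldot e5 e5.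
Proof.
  intros (o12 & o13 & o14 & o15 & o23 & o24 & o25 & o34 & o35 & o45) ->.
  rewrite !ldot_lin5l, (ldotC e2 e1), (ldotC e3 e1), (ldotC e4 e1), (ldotC e5 e1),
    (ldotC e3 e2), (ldotC e4 e2), (ldotC e5 e2), (ldotC e4 e3), (ldotC e5 e3), (ldotC e5 e4),
    o12, o13, o14, o15, o23, o24, o25, o34, o35, o45.
  repeat split; ring.
Qed.

Lemma ldot_orthogonal_expansion e1 e2 e3 e4 e5 :
  orthogonal5 e1 e2 e3 e4 e5 ->
  ldot e1 e1 <> 0 -> ldot e2 e2 <> 0 -> ldot e3 e3 <> 0 -> ldot e4 e4 <> 0 -> ldot e5 e5 <> 0 ->
  forall u v, ldot u v =
    ldot u e1 * ldot v e1 / ldot e1 e1 + ldot u e2 * ldot v e2 / ldot e2 e2 +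
    ldot u e3 * ldot v e3 / ldot e3 e3 + ldot u e4 * ldot v e4 / ldot e4 e4 +
    ldot u e5 * ldot v e5 / ldot e5 e5.
Proof.
  intros orth n1 n2 n3 n4 n5 u v.
  destruct (lin5_spans e1 e2 e3 e4 e5) with (v := u) as (a1 & a2 & a3 & a4 & a5 & ->).
  - intros a1 a2 a3 a4 a5 a_0.
    destruct (ldot_lin5_orthogonal a1 a2 a3 a4 a5 e1 e2 e3 e4 e5 vzero orth (eq_sym a_0))
      as (g1 & g2 & g3 & g4 & g5).
    rewrite ldot0l in g1, g2, g3, g4, g5.
    repeat split; [exact (Rmult_eq0_reg_r _ _ n1 (eq_sym g1))
      | exact (Rmult_eq0_reg_r _ _ n2 (eq_sym g2)) | exact (Rmult_eq0_reg_r _ _ n3 (eq_sym g3))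
      | exact (Rmult_eq0_reg_r _ _ n4 (eq_sym g4)) | exact (Rmult_eq0_reg_r _ _ n5 (eq_sym g5))].
  - destruct (ldot_lin5_orthogonal a1 a2 a3 a4 a5 e1 e2 e3 e4 e5 _ orth eq_refl)
      as (g1 & g2 & g3 & g4 & g5).
    rewrite g1, g2, g3, g4, g5, ldot_lin5l,
      (ldotC e1 v), (ldotC e2 v), (ldotC e3 v), (ldotC e4 v), (ldotC e5 v).
    field; repeat split; assumption.
Qed.

Lemma orthogonal_complement_span f W X Y Z :
  ldot f f <> 0 -> ldot f W = 0 -> ldot f X = 0 -> ldot f Y = 0 -> ldot f Z = 0 ->
  ldot W W = 0 -> ldot W X = 0 -> ldot W Y = 0 -> ldot W Z <> 0 ->
  ldot X X <> 0 -> ldot Y Y <> 0 -> ldot X Y = 0 ->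
  forall v, ldot f v = 0 <->
    exists b c d e, v = vadd (vadd (vscal b W) (vscal c X)) (vadd (vscal d Y) (vscal e Z)).
Proof.
  intros ff fW fX fY fZ WW WX WY WZ XX YY XY v; split.
  - intro fv.
    destruct (lin5_spans f W X Y Z) with (v := v) as (k1 & k2 & k3 & k4 & k5 & v_eq).
    + intros a1 a2 a3 a4 a5 a_0.
      assert (dot_0 : forall w, ldot (lin5 a1 a2 a3 a4 a5 f W X Y Z) w = 0)
        by (intro w; rewrite a_0; apply ldot0l).
      pose proof (dot_0 f) as d1; pose proof (dot_0 W) as d2; pose proof (dot_0 X) as d3;
        pose proof (dot_0 Y) as d4; pose proof (dot_0 Z) as d5.
      rewrite ldot_lin5l in d1, d2, d3, d4, d5.
      rewrite (ldotC W f), (ldotC X f), (ldotC Y f), (ldotC Z f), fW, fX, fY, fZ in d1.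
      rewrite (ldotC X W), (ldotC Y W), (ldotC Z W), fW, WW, WX, WY in d2.
      rewrite (ldotC Y X), fX, WX, XY in d3.
      rewrite fY, WY, XY in d4.
      rewrite fZ in d5.
      (* The Gram matrix is triangular in the order f, W, X, Y, Z. *)
      assert (a1 = 0) by (apply (Rmult_eq0_reg_r a1 (ldot f f)); lra); subst a1.
      assert (a5 = 0) by (apply (Rmult_eq0_reg_r a5 (ldot W Z)); lra); subst a5.
      assert (a3 = 0) by (apply (Rmult_eq0_reg_r a3 (ldot X X)); lra); subst a3.
      assert (a4 = 0) by (apply (Rmult_eq0_reg_r a4 (ldot Y Y)); lra); subst a4.
      repeat split; apply (Rmult_eq0_reg_r a2 (ldot W Z)); lra.
    + assert (k1 = 0).
      { rewrite v_eq, ldotC, ldot_lin5l, (ldotC W f), (ldotC X f), (ldotC Y f), (ldotC Z f),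
          fW, fX, fY, fZ in fv.
        apply (Rmult_eq0_reg_r k1 (ldot f f)); lra. }
      subst k1; exists k2, k3, k4, k5; rewrite v_eq; unfold lin5; vec_field.
  - intros (b & c & d & e & ->); ldot_simpl; rewrite fW, fX, fY, fZ; ring.
Qed.

Section ConformalPair.
Variables (e0 e1 e2 n1 n2 : V5) (E : R).
Hypothesis E_neq0 : E <> 0.
Hypothesis ldot_expand : forall u v, ldot u v =
  ldot u e0 * ldot v e0 + (ldot u e1 * ldot v e1 + ldot u e2 * ldot v e2) / E +
  ldot u n1 * ldot v n1 - ldot u n2 * ldot v n2.

(* The tangential part of A + iB is a multiple of e1 - i e2 and its normal part lies along the
   null vector n1 + n2. *)
Lemma ldot_conformal_pair A B :
  ldot A e0 = 0 -> ldot B e0 = 0 -> ldot B e1 = ldot A e2 -> ldot B e2 = - ldot A e1 ->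
  ldot A (vadd n1 n2) = 0 -> ldot B (vadd n1 n2) = 0 ->
  ldot A A = (ldot A e1 ^ 2 + ldot A e2 ^ 2) / E /\ ldot B B = ldot A A /\ ldot A B = 0.
Proof.
  intros A0 B0 B1 B2 An Bn; rewrite ldotDr in An, Bn.
  rewrite (ldot_expand A A), (ldot_expand B B), (ldot_expand A B), A0, B0, B1, B2.
  replace (ldot A n2) with (- ldot A n1) by lra; replace (ldot B n2) with (- ldot B n1) by lra.
  repeat split; field; exact E_neq0.
Qed.
End ConformalPair.

Lemma cdot_self_eq0 A B : ldot A A = ldot B B -> ldot A B = 0 -> cdot (mkCV A B) (mkCV A B) = C0.
Proof. intros AA_BB AB; unfold cdot, C0; cbn [rv iv]; rewrite (ldotC B A); f_equal; lra. Qed.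

Definition is_vderive (F : R -> V5) (t : R) (l : V5) : Prop :=
  derivable_pt_lim (fun s => c0 (F s)) t (c0 l) /\
  derivable_pt_lim (fun s => Defs.c1 (F s)) t (Defs.c1 l) /\
  derivable_pt_lim (fun s => c2 (F s)) t (c2 l) /\
  derivable_pt_lim (fun s => c3 (F s)) t (c3 l) /\
  derivable_pt_lim (fun s => c4 (F s)) t (c4 l).

Lemma derivable_pt_lim_eq_deriv f t l l' :
  derivable_pt_lim f t l -> l = l' -> derivable_pt_lim f t l'.
Proof. now intros D <-. Qed.

Lemma is_vderive_const v t : is_vderive (fun _ => v) t vzero.
Proof. repeat split; apply derivable_pt_lim_const. Qed.

Lemma is_vderive_vscal k F t l :
  is_vderive F t l -> is_vderive (fun s => vscal k (F s)) t (vscal k l).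
Proof.
  intros (d0 & d1 & d2 & d3 & d4).
  repeat split; simpl; apply derivable_pt_lim_scal; assumption.
Qed.

Lemma is_vderive_ldot F G t l m : is_vderive F t l -> is_vderive G t m ->
  derivable_pt_lim (fun s => ldot (F s) (G s)) t (ldot l (G t) + ldot (F t) m).
Proof.
  intros (d0 & d1 & d2 & d3 & d4) (e0 & e1 & e2 & e3 & e4); unfold ldot.
  eapply derivable_pt_lim_eq_deriv.
  - repeat first [apply derivable_pt_lim_minus | apply derivable_pt_lim_plus
                 | apply derivable_pt_lim_mult]; eassumption.
  - cbv beta; ring.
Qed.

Lemma derivable_pt_lim_locally_const (phi : R -> R) t e c l : e > 0 ->
  (forall s, Rabs (s - t) < e -> phi s = c) -> derivable_pt_lim phi t l -> l = 0.
Proof.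
  intros e_pos phi_c D; apply (uniqueness_limite phi t); [exact D |].
  intros eps eps_pos; exists (mkposreal e e_pos); intros h h_neq0 h_small.
  rewrite !phi_c; simpl.
  - unfold Rminus; rewrite Rplus_opp_r, Rdiv_0_l, Rplus_opp_r, Rabs_R0; exact eps_pos.
  - rewrite Rminus_diag, Rabs_R0; exact e_pos.
  - now replace (t + h - t) with h by ring.
Qed.

Lemma open2_line_x D x y : open2 D -> D x y ->
  exists e, e > 0 /\ forall s, Rabs (s - x) < e -> D s y.
Proof.
  intros D_open Dxy; destruct (D_open x y Dxy) as (e & e_pos & ball).
  exists e; split; [exact e_pos |]; intros s s_near; apply ball.
  rewrite Rminus_diag, <- (pow2_abs (s - x)).
  pose proof (Rabs_pos (s - x)); nra.
Qed.

Lemma open2_line_y D x y : open2 D -> D x y ->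
  exists e, e > 0 /\ forall s, Rabs (s - y) < e -> D x s.
Proof.
  intros D_open Dxy; destruct (D_open x y Dxy) as (e & e_pos & ball).
  exists e; split; [exact e_pos |]; intros s s_near; apply ball.
  rewrite Rminus_diag, <- (pow2_abs (s - y)).
  pose proof (Rabs_pos (s - y)); nra.
Qed.

Lemma Pdx_locally_const D (phi : R -> R -> R) c x y l : open2 D -> D x y ->
  (forall a b, D a b -> phi a b = c) -> derivable_pt_lim (fun s => phi s y) x l -> l = 0.
Proof.
  intros D_open Dxy phi_c; destruct (open2_line_x D x y D_open Dxy) as (e & e_pos & line).
  apply (derivable_pt_lim_locally_const _ x e c); [exact e_pos |].
  intros s s_near; exact (phi_c s y (line s s_near)).
Qed.

Lemma Pdy_locally_const D (phi : R -> R -> R) c x y l : open2 D -> D x y ->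
  (forall a b, D a b -> phi a b = c) -> derivable_pt_lim (fun s => phi x s) y l -> l = 0.
Proof.
  intros D_open Dxy phi_c; destruct (open2_line_y D x y D_open Dxy) as (e & e_pos & line).
  apply (derivable_pt_lim_locally_const _ y e c); [exact e_pos |].
  intros s s_near; exact (phi_c x s (line s s_near)).
Qed.

Lemma dxr_eq g x y l : derivable_pt_lim (fun t => g t y) x l -> dxr g x y = l.
Proof.
  intro D; apply (uniqueness_limite (fun t => g t y) x); [| exact D].
  apply (epsilon_spec (inhabits 0) (fun l => derivable_pt_lim (fun t => g t y) x l)).
  now exists l.
Qed.

Lemma dyr_eq g x y l : derivable_pt_lim (fun t => g x t) y l -> dyr g x y = l.
Proof.
  intro D; apply (uniqueness_limite (fun t => g x t) y); [| exact D].
  apply (epsilon_spec (inhabits 0) (fun l => derivable_pt_lim (fun t => g x t) y l)).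
  now exists l.
Qed.

Lemma Pdx_eq F x y l : is_vderive (fun s => F s y) x l -> Pdx F x y = l.
Proof.
  destruct l; intros (d0 & d1 & d2 & d3 & d4); unfold Pdx, compmap.
  f_equal; apply dxr_eq; assumption.
Qed.

Lemma Pdy_eq F x y l : is_vderive (fun s => F x s) y l -> Pdy F x y = l.
Proof.
  destruct l; intros (d0 & d1 & d2 & d3 & d4); unfold Pdy, compmap.
  f_equal; apply dyr_eq; assumption.
Qed.

Lemma Ck_on_sub k U U' g : subset2 U' U -> Ck_on k U g -> Ck_on k U' g.
Proof.
  intro sub; revert g; induction k as [| k IH]; simpl; intro g.
  - intros cont x y U'xy; exact (cont x y (sub x y U'xy)).
  - intros (cont & dx & dy & Cx & Cy); repeat split; auto.
Qed.

Lemma smooth_on_sub U U' F : subset2 U' U -> smooth_on U F -> smooth_on U' F.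
Proof.
  intros sub F_smooth k; destruct (F_smooth k) as (s0 & s1 & s2 & s3 & s4).
  repeat split; apply (Ck_on_sub k U); assumption.
Qed.

Lemma smooth_on_Pdx U F : smooth_on U F -> smooth_on U (Pdx F).
Proof.
  intros F_smooth k; destruct (F_smooth (S k)) as (s0 & s1 & s2 & s3 & s4); simpl in *.
  repeat split; tauto.
Qed.

Lemma smooth_on_Pdy U F : smooth_on U F -> smooth_on U (Pdy F).
Proof.
  intros F_smooth k; destruct (F_smooth (S k)) as (s0 & s1 & s2 & s3 & s4); simpl in *.
  repeat split; tauto.
Qed.

Lemma is_vderive_Pdx U F x y : smooth_on U F -> U x y ->
  is_vderive (fun s => F s y) x (Pdx F x y).
Proof.
  intros F_smooth Uxy; destruct (F_smooth 1%nat) as (s0 & s1 & s2 & s3 & s4); simpl in *.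
  repeat split; [apply s0 | apply s1 | apply s2 | apply s3 | apply s4]; exact Uxy.
Qed.

Lemma is_vderive_Pdy U F x y : smooth_on U F -> U x y ->
  is_vderive (fun s => F x s) y (Pdy F x y).
Proof.
  intros F_smooth Uxy; destruct (F_smooth 1%nat) as (s0 & s1 & s2 & s3 & s4); simpl in *.
  repeat split; [apply s0 | apply s1 | apply s2 | apply s3 | apply s4]; exact Uxy.
Qed.

Lemma derivable_pt_lim_ldot_Pdx U F G x y : smooth_on U F -> smooth_on U G -> U x y ->
  derivable_pt_lim (fun s => ldot (F s y) (G s y)) x
    (ldot (Pdx F x y) (G x y) + ldot (F x y) (Pdx G x y)).
Proof.
  intros F_smooth G_smooth Uxy.
  apply (is_vderive_ldot (fun s => F s y) (fun s => G s y)); apply (is_vderive_Pdx U); assumption.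
Qed.

Lemma derivable_pt_lim_ldot_Pdy U F G x y : smooth_on U F -> smooth_on U G -> U x y ->
  derivable_pt_lim (fun s => ldot (F x s) (G x s)) y
    (ldot (Pdy F x y) (G x y) + ldot (F x y) (Pdy G x y)).
Proof.
  intros F_smooth G_smooth Uxy.
  apply (is_vderive_ldot (fun s => F x s) (fun s => G x s)); apply (is_vderive_Pdy U); assumption.
Qed.

Lemma ldot_const_Pdx U F G c x y : open2 U -> smooth_on U F -> smooth_on U G ->
  (forall a b, U a b -> ldot (F a b) (G a b) = c) -> U x y ->
  ldot (Pdx F x y) (G x y) + ldot (F x y) (Pdx G x y) = 0.
Proof.
  intros U_open F_smooth G_smooth FG_c Uxy.
  exact (Pdx_locally_const U _ c x y _ U_open Uxy FG_c
    (derivable_pt_lim_ldot_Pdx U F G x y F_smooth G_smooth Uxy)).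
Qed.

Lemma ldot_const_Pdy U F G c x y : open2 U -> smooth_on U F -> smooth_on U G ->
  (forall a b, U a b -> ldot (F a b) (G a b) = c) -> U x y ->
  ldot (Pdy F x y) (G x y) + ldot (F x y) (Pdy G x y) = 0.
Proof.
  intros U_open F_smooth G_smooth FG_c Uxy.
  exact (Pdy_locally_const U _ c x y _ U_open Uxy FG_c
    (derivable_pt_lim_ldot_Pdy U F G x y F_smooth G_smooth Uxy)).
Qed.

Section MixedPartials.
Import Coquelicot.Coquelicot.

Variables (U : R -> R -> Prop) (g : R -> R -> R).
Hypothesis U_open : open2 U.
Hypothesis g_C2 : Ck_on 2 U g.

Lemma locally_2d_of_open2 x y : U x y -> locally_2d U x y.
Proof.
  intro Uxy; destruct (U_open x y Uxy) as (e & e_pos & ball).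
  assert (e2_pos : 0 < e / 2) by lra.
  exists (mkposreal (e / 2) e2_pos); simpl; intros u v u_near v_near; apply ball.
  rewrite <- (pow2_abs (u - x)), <- (pow2_abs (v - y)).
  pose proof (Rabs_pos (u - x)); pose proof (Rabs_pos (v - y)); nra.
Qed.

Lemma continuity_2d_pt_of_cont2_at h x y : cont2_at h x y -> continuity_2d_pt h x y.
Proof.
  intros h_cont eps; destruct (h_cont eps (cond_pos eps)) as (d & d_pos & ball).
  assert (d2_pos : 0 < d / 2) by lra.
  exists (mkposreal (d / 2) d2_pos); simpl; intros u v u_near v_near; apply ball.
  rewrite <- (pow2_abs (u - x)), <- (pow2_abs (v - y)).
  pose proof (Rabs_pos (u - x)); pose proof (Rabs_pos (v - y)); nra.
Qed.

Lemma Derive_x_eq u v : U u v -> Derive (fun t => g t v) u = dxr g u v.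
Proof. intro Uuv; apply is_derive_unique, is_derive_Reals, g_C2, Uuv. Qed.

Lemma Derive_y_eq u v : U u v -> Derive (fun t => g u t) v = dyr g u v.
Proof. intro Uuv; apply is_derive_unique, is_derive_Reals, g_C2, Uuv. Qed.

Lemma Derive_y_eq_loc u v : U u v ->
  locally u (fun z => Derive (fun t => g z t) v = dyr g z v).
Proof.
  intro Uuv; apply (filter_imp (fun z => U z v)).
  - intros z Uzv; exact (Derive_y_eq z v Uzv).
  - apply (locally_2d_1d_const_y U), locally_2d_of_open2, Uuv.
Qed.

Lemma Derive_x_eq_loc u v : U u v ->
  locally v (fun z => Derive (fun t => g t z) u = dxr g u z).
Proof.
  intro Uuv; apply (filter_imp (fun z => U u z)).
  - intros z Uuz; exact (Derive_x_eq u z Uuz).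
  - apply (locally_2d_1d_const_x U), locally_2d_of_open2, Uuv.
Qed.

Lemma Derive_xy_eq u v : U u v ->
  Derive (fun z => Derive (fun t => g z t) v) u = dxr (dyr g) u v.
Proof.
  intro Uuv; rewrite (Derive_ext_loc _ (fun z => dyr g z v)) by exact (Derive_y_eq_loc u v Uuv).
  apply is_derive_unique, is_derive_Reals, g_C2, Uuv.
Qed.

Lemma Derive_yx_eq u v : U u v ->
  Derive (fun z => Derive (fun t => g t z) u) v = dyr (dxr g) u v.
Proof.
  intro Uuv; rewrite (Derive_ext_loc _ (fun z => dxr g u z)) by exact (Derive_x_eq_loc u v Uuv).
  apply is_derive_unique, is_derive_Reals, g_C2, Uuv.
Qed.

Lemma dxr_dyr_comm x y : U x y -> dxr (dyr g) x y = dyr (dxr g) x y.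
Proof.
  intro Uxy; destruct g_C2 as (_ & _ & _ & (_ & _ & _ & _ & cont_yx) & (_ & _ & _ & cont_xy & _)).
  rewrite <- Derive_xy_eq, <- Derive_yx_eq by exact Uxy.
  apply Schwarz.
  - apply (locally_2d_impl U); [apply locally_2d_forall | apply locally_2d_of_open2, Uxy].
    intros u v Uuv; repeat split.
    + exists (dxr g u v); apply is_derive_Reals, g_C2, Uuv.
    + exists (dyr g u v); apply is_derive_Reals, g_C2, Uuv.
    + apply (ex_derive_ext_loc (fun z => dyr g z v)).
      * apply (filter_imp _ _ (fun z => @eq_sym _ _ _) (Derive_y_eq_loc u v Uuv)).
      * exists (dxr (dyr g) u v); apply is_derive_Reals, g_C2, Uuv.
    + apply (ex_derive_ext_loc (fun z => dxr g u z)).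
      * apply (filter_imp _ _ (fun z => @eq_sym _ _ _) (Derive_x_eq_loc u v Uuv)).
      * exists (dyr (dxr g) u v); apply is_derive_Reals, g_C2, Uuv.
  - apply (continuity_2d_pt_ext_loc (dxr (dyr g))).
    + apply (locally_2d_impl U); [apply locally_2d_forall | apply locally_2d_of_open2, Uxy].
      intros u v Uuv; symmetry; apply Derive_xy_eq, Uuv.
    + apply continuity_2d_pt_of_cont2_at, cont_xy, Uxy.
  - apply (continuity_2d_pt_ext_loc (dyr (dxr g))).
    + apply (locally_2d_impl U); [apply locally_2d_forall | apply locally_2d_of_open2, Uxy].
      intros u v Uuv; symmetry; apply Derive_yx_eq, Uuv.
    + apply continuity_2d_pt_of_cont2_at, cont_yx, Uxy.
Qed.
End MixedPartials.

Lemma Pdx_Pdy_comm U F x y : open2 U -> smooth_on U F -> U x y ->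
  Pdx (Pdy F) x y = Pdy (Pdx F) x y.
Proof.
  intros U_open F_smooth Uxy; unfold Pdx, Pdy, compmap; simpl.
  destruct (F_smooth 2%nat) as (s0 & s1 & s2 & s3 & s4).
  f_equal; apply (dxr_dyr_comm U); assumption.
Qed.

Lemma Pdx_const v x y : Pdx (fun _ _ => v) x y = vzero.
Proof. apply Pdx_eq, is_vderive_const. Qed.

Lemma Pdy_const v x y : Pdy (fun _ _ => v) x y = vzero.
Proof. apply Pdy_eq, is_vderive_const. Qed.

Lemma Pdx_vscal U F k x y : smooth_on U F -> U x y ->
  Pdx (fun a b => vscal k (F a b)) x y = vscal k (Pdx F x y).
Proof. intros F_smooth Uxy; apply Pdx_eq, is_vderive_vscal, (is_vderive_Pdx U); assumption. Qed.

Lemma Pdy_vscal U F k x y : smooth_on U F -> U x y ->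
  Pdy (fun a b => vscal k (F a b)) x y = vscal k (Pdy F x y).
Proof. intros F_smooth Uxy; apply Pdy_eq, is_vderive_vscal, (is_vderive_Pdy U); assumption. Qed.

Lemma dz_eq F : dz F = fun a b => mkCV (vscal (/2) (Pdx F a b)) (vscal (-/2) (Pdy F a b)).
Proof.
  extensionality a; extensionality b; unfold dz, dzC, creal; cbn [rv iv].
  rewrite Pdx_const, Pdy_const; change (fun u v => F u v) with F; f_equal; vec_field.
Qed.

Lemma rv_dzbC_dz U f x y : smooth_on U f -> U x y ->
  rv (dzbC (dz f) x y) = vscal (/4) (vadd (Pdx (Pdx f) x y) (Pdy (Pdy f) x y)).
Proof.
  intros f_smooth Uxy; rewrite dz_eq; unfold dzbC; cbn [rv iv].
  rewrite (Pdx_vscal U), (Pdy_vscal U); auto using smooth_on_Pdx, smooth_on_Pdy.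
  vec_field.
Qed.

Lemma dzC_dz U f x y : open2 U -> smooth_on U f -> U x y ->
  dzC (dz f) x y =
  mkCV (vscal (/4) (vadd (Pdx (Pdx f) x y) (vscal (-1) (Pdy (Pdy f) x y))))
       (vscal (-/2) (Pdy (Pdx f) x y)).
Proof.
  intros U_open f_smooth Uxy; rewrite dz_eq; unfold dzC; cbn [rv iv].
  rewrite !(Pdx_vscal U), !(Pdy_vscal U), (Pdx_Pdy_comm U f);
    auto using smooth_on_Pdx, smooth_on_Pdy.
  f_equal; vec_field.
Qed.

Section NullGaussMap.
Variables (U : R -> R -> Prop) (f N1 N2 H W : R -> R -> V5) (h : R -> R -> R).
Hypothesis U_open : open2 U.
Hypothesis f_immersion : conformal_spacelike_immersion_S41 U f.
Hypothesis N_frame : normal_frame U f N1 N2.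
Hypothesis f_mean_curvature : is_mean_curvature U f H.
Hypothesis H_null_normal : forall x y, U x y -> H x y = vscal (h x y) (vadd (N1 x y) (N2 x y)).
Hypothesis f_non_isotropic : non_isotropic U f.
Hypothesis W_lift : local_lift_of_null_gauss U N1 N2 W.

Lemma f_smooth : smooth_on U f.
Proof. exact (proj1 f_immersion). Qed.

Lemma W_smooth : smooth_on U W.
Proof. exact (proj1 W_lift). Qed.

Local Hint Resolve f_smooth W_smooth smooth_on_Pdx smooth_on_Pdy : core.

Lemma W_parallel x y : U x y ->
  exists t, t <> 0 /\ W x y = vscal t (vadd (N1 x y) (N2 x y)).
Proof.
  intro Uxy; destruct (proj2 W_lift x y Uxy) as (_ & _ & _ & t & t_neq0 & Wt).
  now exists t.
Qed.

Lemma ldot_W_of_normal x y v : U x y ->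
  ldot v (N1 x y) = 0 -> ldot v (N2 x y) = 0 -> ldot v (W x y) = 0.
Proof.
  intros Uxy vN1 vN2; destruct (W_parallel x y Uxy) as (t & _ & ->).
  ldot_simpl; rewrite vN1, vN2; ring.
Qed.

Lemma ldot_normal_of_W x y v : U x y ->
  ldot v (W x y) = 0 -> ldot v (vadd (N1 x y) (N2 x y)) = 0.
Proof.
  intros Uxy vW; destruct (W_parallel x y Uxy) as (t & t_neq0 & Wt).
  rewrite Wt, ldotZr, Rmult_comm in vW; exact (Rmult_eq0_reg_r _ _ t_neq0 vW).
Qed.

Lemma ldot_f_f x y : U x y -> ldot (f x y) (f x y) = 1.
Proof. intro Uxy; exact (proj1 (proj2 f_immersion x y Uxy)). Qed.

Lemma ldot_W_W x y : U x y -> ldot (W x y) (W x y) = 0.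
Proof. intro Uxy; exact (proj2 (proj1 (proj2 W_lift x y Uxy))). Qed.

Lemma tangent_orth_W x y : U x y ->
  ldot (f x y) (W x y) = 0 /\ ldot (Pdx f x y) (W x y) = 0 /\ ldot (Pdy f x y) (W x y) = 0.
Proof.
  intro Uxy; destruct (proj2 (proj2 N_frame) x y Uxy)
    as (n1f & n1fx & n1fy & n2f & n2fx & n2fy & _).
  rewrite ldotC in n1f, n1fx, n1fy, n2f, n2fx, n2fy.
  repeat split; apply ldot_W_of_normal; assumption.
Qed.

Lemma ldot_f_W x y : U x y -> ldot (f x y) (W x y) = 0.
Proof. intro Uxy; exact (proj1 (tangent_orth_W x y Uxy)). Qed.

Lemma ldot_f_Pdx_W x y : U x y -> ldot (f x y) (Pdx W x y) = 0.
Proof.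
  intro Uxy; pose proof (ldot_const_Pdx U f W 0 x y U_open f_smooth W_smooth ldot_f_W Uxy).
  destruct (tangent_orth_W x y Uxy) as (_ & fxW & _); lra.
Qed.

Lemma ldot_f_Pdy_W x y : U x y -> ldot (f x y) (Pdy W x y) = 0.
Proof.
  intro Uxy; pose proof (ldot_const_Pdy U f W 0 x y U_open f_smooth W_smooth ldot_f_W Uxy).
  destruct (tangent_orth_W x y Uxy) as (_ & _ & fyW); lra.
Qed.

Lemma ldot_Pdx_W_W x y : U x y -> ldot (Pdx W x y) (W x y) = 0.
Proof.
  intro Uxy; pose proof (ldot_const_Pdx U W W 0 x y U_open W_smooth W_smooth ldot_W_W Uxy).
  rewrite (ldotC (W x y)) in *; lra.
Qed.

Lemma ldot_Pdy_W_W x y : U x y -> ldot (Pdy W x y) (W x y) = 0.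
Proof.
  intro Uxy; pose proof (ldot_const_Pdy U W W 0 x y U_open W_smooth W_smooth ldot_W_W Uxy).
  rewrite (ldotC (W x y)) in *; lra.
Qed.

Lemma ldot_Pdx_f_f x y : U x y -> ldot (Pdx f x y) (f x y) = 0.
Proof.
  intro Uxy; pose proof (ldot_const_Pdx U f f 1 x y U_open f_smooth f_smooth ldot_f_f Uxy).
  rewrite (ldotC (f x y)) in *; lra.
Qed.

Lemma ldot_Pdy_f_f x y : U x y -> ldot (Pdy f x y) (f x y) = 0.
Proof.
  intro Uxy; pose proof (ldot_const_Pdy U f f 1 x y U_open f_smooth f_smooth ldot_f_f Uxy).
  rewrite (ldotC (f x y)) in *; lra.
Qed.

Lemma ldot_second_f_f x y : U x y ->
  ldot (Pdx (Pdx f) x y) (f x y) = - ldot (Pdx f x y) (Pdx f x y) /\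
  ldot (Pdy (Pdy f) x y) (f x y) = - ldot (Pdx f x y) (Pdx f x y) /\
  ldot (Pdy (Pdx f) x y) (f x y) = 0.
Proof.
  intro Uxy; destruct (proj2 f_immersion x y Uxy) as (_ & _ & conformal & fx_fy).
  pose proof (ldot_const_Pdx U (Pdx f) f 0 x y U_open ltac:(auto) f_smooth ldot_Pdx_f_f Uxy).
  pose proof (ldot_const_Pdy U (Pdy f) f 0 x y U_open ltac:(auto) f_smooth ldot_Pdy_f_f Uxy).
  pose proof (ldot_const_Pdy U (Pdx f) f 0 x y U_open ltac:(auto) f_smooth ldot_Pdx_f_f Uxy).
  repeat split; lra.
Qed.

(* Derivatives of the conformality relations |f_x|^2 = |f_y|^2 and <f_x, f_y> = 0. *)
Lemma ldot_second_f_tangent x y : U x y ->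
  ldot (Pdx (Pdx f) x y) (Pdx f x y) = ldot (Pdy (Pdx f) x y) (Pdy f x y) /\
  ldot (Pdy (Pdy f) x y) (Pdy f x y) = ldot (Pdy (Pdx f) x y) (Pdx f x y) /\
  ldot (Pdx (Pdx f) x y) (Pdy f x y) = - ldot (Pdy (Pdx f) x y) (Pdx f x y) /\
  ldot (Pdy (Pdy f) x y) (Pdx f x y) = - ldot (Pdy (Pdx f) x y) (Pdy f x y).
Proof.
  intro Uxy.
  assert (conformal : forall a b, U a b ->
    ldot (Pdx f a b) (Pdx f a b) - ldot (Pdy f a b) (Pdy f a b) = 0).
  { intros a b Uab; destruct (proj2 f_immersion a b Uab) as (_ & _ & E & _); lra. }
  assert (fx_fy : forall a b, U a b -> ldot (Pdx f a b) (Pdy f a b) = 0)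
    by (intros a b Uab; apply (proj2 f_immersion a b Uab)).
  assert (fx := smooth_on_Pdx U f f_smooth); assert (fy := smooth_on_Pdy U f f_smooth).
  pose proof (Pdx_locally_const U _ 0 x y _ U_open Uxy conformal (derivable_pt_lim_minus _ _ _ _ _
    (derivable_pt_lim_ldot_Pdx U _ _ x y fx fx Uxy) (derivable_pt_lim_ldot_Pdx U _ _ x y fy fy Uxy))).
  pose proof (Pdy_locally_const U _ 0 x y _ U_open Uxy conformal (derivable_pt_lim_minus _ _ _ _ _
    (derivable_pt_lim_ldot_Pdy U _ _ x y fx fx Uxy) (derivable_pt_lim_ldot_Pdy U _ _ x y fy fy Uxy))).
  pose proof (ldot_const_Pdx U (Pdx f) (Pdy f) 0 x y U_open ltac:(auto) ltac:(auto) fx_fy Uxy).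
  pose proof (ldot_const_Pdy U (Pdx f) (Pdy f) 0 x y U_open ltac:(auto) ltac:(auto) fx_fy Uxy).
  rewrite (Pdx_Pdy_comm U f x y U_open f_smooth Uxy) in *.
  rewrite !(ldotC (Pdx f x y)), !(ldotC (Pdy f x y)) in *; repeat split; lra.
Qed.

Lemma ldot_second_f_W x y : U x y ->
  ldot (Pdx f x y) (Pdx W x y) = - ldot (Pdx (Pdx f) x y) (W x y) /\
  ldot (Pdx f x y) (Pdy W x y) = - ldot (Pdy (Pdx f) x y) (W x y) /\
  ldot (Pdy f x y) (Pdx W x y) = - ldot (Pdy (Pdx f) x y) (W x y) /\
  ldot (Pdy f x y) (Pdy W x y) = - ldot (Pdy (Pdy f) x y) (W x y).
Proof.
  intro Uxy.
  assert (fxW : forall a b, U a b -> ldot (Pdx f a b) (W a b) = 0)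
    by (intros a b Uab; apply (tangent_orth_W a b Uab)).
  assert (fyW : forall a b, U a b -> ldot (Pdy f a b) (W a b) = 0)
    by (intros a b Uab; apply (tangent_orth_W a b Uab)).
  pose proof (ldot_const_Pdx U (Pdx f) W 0 x y U_open ltac:(auto) W_smooth fxW Uxy).
  pose proof (ldot_const_Pdy U (Pdx f) W 0 x y U_open ltac:(auto) W_smooth fxW Uxy).
  pose proof (ldot_const_Pdx U (Pdy f) W 0 x y U_open ltac:(auto) W_smooth fyW Uxy).
  pose proof (ldot_const_Pdy U (Pdy f) W 0 x y U_open ltac:(auto) W_smooth fyW Uxy).
  rewrite (Pdx_Pdy_comm U f x y U_open f_smooth Uxy) in *; repeat split; lra.
Qed.

Lemma ldot_f_second_W x y : U x y ->
  ldot (f x y) (Pdx (Pdx W) x y) = - ldot (Pdx f x y) (Pdx W x y) /\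
  ldot (f x y) (Pdy (Pdy W) x y) = - ldot (Pdy f x y) (Pdy W x y).
Proof.
  intro Uxy.
  pose proof (ldot_const_Pdx U f (Pdx W) 0 x y U_open f_smooth ltac:(auto) ldot_f_Pdx_W Uxy).
  pose proof (ldot_const_Pdy U f (Pdy W) 0 x y U_open f_smooth ltac:(auto) ldot_f_Pdy_W Uxy).
  split; lra.
Qed.

Lemma ldot_W_second_W x y : U x y ->
  ldot (Pdx (Pdx W) x y) (W x y) = - ldot (Pdx W x y) (Pdx W x y) /\
  ldot (Pdy (Pdy W) x y) (W x y) = - ldot (Pdy W x y) (Pdy W x y).
Proof.
  intro Uxy.
  pose proof (ldot_const_Pdx U (Pdx W) W 0 x y U_open ltac:(auto) W_smooth ldot_Pdx_W_W Uxy).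
  pose proof (ldot_const_Pdy U (Pdy W) W 0 x y U_open ltac:(auto) W_smooth ldot_Pdy_W_W Uxy).
  split; lra.
Qed.

(* f_xx + f_yy = 4 e^{2u} (H - f), and H is a multiple of the null vector N1 + N2. *)
Lemma laplacian_f_W x y : U x y ->
  ldot (Pdx (Pdx f) x y) (W x y) + ldot (Pdy (Pdy f) x y) (W x y) = 0.
Proof.
  intro Uxy.
  assert (mc := f_equal (fun v => ldot (rv v) (W x y)) (f_mean_curvature x y Uxy)).
  cbv beta in mc; rewrite (rv_dzbC_dz U f x y f_smooth Uxy) in mc; unfold creal in mc;
    cbn [rv] in mc.
  assert (Wn := ldot_normal_of_W x y (W x y) Uxy (ldot_W_W x y Uxy)); rewrite ldotDr in Wn.
  rewrite (H_null_normal x y Uxy) in mc; ldot_simpl_in mc.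
  rewrite (ldot_f_W x y Uxy), (ldotC (N1 x y)), (ldotC (N2 x y)), Wn, !Rmult_0_r in mc.
  lra.
Qed.

Lemma frame_expansion x y : U x y -> forall u v, ldot u v =
  ldot u (f x y) * ldot v (f x y) +
  (ldot u (Pdx f x y) * ldot v (Pdx f x y) + ldot u (Pdy f x y) * ldot v (Pdy f x y))
    / ldot (Pdx f x y) (Pdx f x y) +
  ldot u (N1 x y) * ldot v (N1 x y) - ldot u (N2 x y) * ldot v (N2 x y).
Proof.
  intros Uxy u v; destruct (proj2 f_immersion x y Uxy) as (ff & E_pos & conformal & fx_fy).
  destruct (proj2 (proj2 N_frame) x y Uxy)
    as (n1f & n1fx & n1fy & n2f & n2fx & n2fy & n11 & n22 & n12 & _).
  rewrite (ldot_orthogonal_expansion (f x y) (Pdx f x y) (Pdy f x y) (N1 x y) (N2 x y)).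
  - rewrite ff, <- conformal, n11, n22; field; lra.
  - pose proof (ldot_Pdx_f_f x y Uxy) as fxf; pose proof (ldot_Pdy_f_f x y Uxy) as fyf.
    rewrite ldotC in fxf, fyf, n1f, n1fx, n1fy, n2f, n2fx, n2fy.
    repeat split; assumption.
  - lra.
  - lra.
  - lra.
  - lra.
  - lra.
Qed.

Lemma gram_dW x y : U x y ->
  ldot (Pdx W x y) (Pdx W x y) =
    (ldot (Pdx (Pdx f) x y) (W x y) ^ 2 + ldot (Pdy (Pdx f) x y) (W x y) ^ 2)
    / ldot (Pdx f x y) (Pdx f x y) /\
  ldot (Pdy W x y) (Pdy W x y) = ldot (Pdx W x y) (Pdx W x y) /\
  ldot (Pdx W x y) (Pdy W x y) = 0.
Proof.
  intro Uxy; destruct (proj2 f_immersion x y Uxy) as (_ & E_pos & _).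
  destruct (ldot_second_f_W x y Uxy) as (fx_Wx & fx_Wy & fy_Wx & fy_Wy).
  pose proof (laplacian_f_W x y Uxy) as lap.
  destruct (ldot_conformal_pair (f x y) (Pdx f x y) (Pdy f x y) (N1 x y) (N2 x y) _
    (Rgt_not_eq _ _ E_pos) (frame_expansion x y Uxy) (Pdx W x y) (Pdy W x y)) as (XX & YY & XY).
  - rewrite ldotC; apply ldot_f_Pdx_W, Uxy.
  - rewrite ldotC; apply ldot_f_Pdy_W, Uxy.
  - rewrite (ldotC (Pdy W x y)), (ldotC (Pdx W x y)), fx_Wy, fy_Wx; reflexivity.
  - rewrite (ldotC (Pdy W x y)), (ldotC (Pdx W x y)), fy_Wy, fx_Wx; lra.
  - apply ldot_normal_of_W; [exact Uxy | apply ldot_Pdx_W_W, Uxy].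
  - apply ldot_normal_of_W; [exact Uxy | apply ldot_Pdy_W_W, Uxy].
  - rewrite (ldotC (Pdx W x y) (Pdx f x y)), (ldotC (Pdx W x y) (Pdy f x y)), fx_Wx, fy_Wx in XX.
    repeat split; [rewrite XX; field; lra | exact YY | exact XY].
Qed.

(* <f_zz, f_zz> = (xi1 - xi2) (xi1 + xi2) vanishes if <f_zz, N1 + N2> = xi1 - xi2 does. *)
Lemma hessian_f_W_neq0 x y : U x y ->
  ldot (Pdx (Pdx f) x y) (W x y) ^ 2 + ldot (Pdy (Pdx f) x y) (W x y) ^ 2 <> 0.
Proof.
  intros Uxy pq0.
  assert (p0 : ldot (Pdx (Pdx f) x y) (W x y) = 0) by nra.
  assert (q0 : ldot (Pdy (Pdx f) x y) (W x y) = 0) by nra.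
  assert (r0 : ldot (Pdy (Pdy f) x y) (W x y) = 0)
    by (pose proof (laplacian_f_W x y Uxy); lra).
  apply (f_non_isotropic x y Uxy); rewrite (dzC_dz U f x y U_open f_smooth Uxy).
  destruct (proj2 f_immersion x y Uxy) as (_ & E_pos & _).
  destruct (ldot_second_f_f x y Uxy) as (fxx_f & fyy_f & fxy_f).
  destruct (ldot_second_f_tangent x y Uxy) as (t1 & t2 & t3 & t4).
  destruct (ldot_conformal_pair (f x y) (Pdx f x y) (Pdy f x y) (N1 x y) (N2 x y) _
    (Rgt_not_eq _ _ E_pos) (frame_expansion x y Uxy)
    (vscal (/4) (vadd (Pdx (Pdx f) x y) (vscal (-1) (Pdy (Pdy f) x y))))
    (vscal (-/2) (Pdy (Pdx f) x y))) as (_ & BB & AB).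
  - ldot_simpl; rewrite fxx_f, fyy_f; ring.
  - ldot_simpl; rewrite fxy_f; ring.
  - ldot_simpl; rewrite t3, t2; field.
  - ldot_simpl; rewrite t1, t4; field.
  - rewrite ldotZl, ldotDl, ldotZl, (ldot_normal_of_W x y _ Uxy p0), (ldot_normal_of_W x y _ Uxy r0); ring.
  - rewrite ldotZl, (ldot_normal_of_W x y _ Uxy q0); ring.
  - apply cdot_self_eq0; [symmetry; exact BB | exact AB].
Qed.

Lemma central_span_orth x y : U x y ->
  forall v, in_central_span W x y v <-> ldot (f x y) v = 0.
Proof.
  intros Uxy v; unfold in_central_span.
  destruct (proj2 f_immersion x y Uxy) as (_ & E_pos & _).
  destruct (gram_dW x y Uxy) as (XX & YY & XY).
  destruct (ldot_f_second_W x y Uxy) as (f_Wxx & f_Wyy).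
  destruct (ldot_W_second_W x y Uxy) as (Wxx_W & Wyy_W).
  destruct (ldot_second_f_W x y Uxy) as (fx_Wx & _ & _ & fy_Wy).
  pose proof (laplacian_f_W x y Uxy) as lap.
  pose proof (hessian_f_W_neq0 x y Uxy) as pq.
  assert (XX_pos : ldot (Pdx W x y) (Pdx W x y) > 0).
  { rewrite XX; apply Rdiv_lt_0_compat; [| exact E_pos].
    destruct (Rle_lt_or_eq_dec 0 _ (Rplus_le_le_0_compat _ _ (pow2_ge_0 (ldot (Pdx (Pdx f) x y) (W x y))) (pow2_ge_0 (ldot (Pdy (Pdx f) x y) (W x y))))); [assumption | now exfalso; apply pq]. }
  symmetry; apply orthogonal_complement_span.
  - rewrite (ldot_f_f x y Uxy); exact R1_neq_R0.
  - exact (ldot_f_W x y Uxy).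
  - exact (ldot_f_Pdx_W x y Uxy).
  - exact (ldot_f_Pdy_W x y Uxy).
  - rewrite ldotDr, f_Wxx, f_Wyy, fx_Wx, fy_Wy; lra.
  - exact (ldot_W_W x y Uxy).
  - rewrite ldotC; exact (ldot_Pdx_W_W x y Uxy).
  - rewrite ldotC; exact (ldot_Pdy_W_W x y Uxy).
  - rewrite ldotC, ldotDl, Wxx_W, Wyy_W, YY; lra.
  - lra.
  - rewrite YY; lra.
  - exact XY.
Qed.

Lemma null_gauss_envelope x y : U x y ->
  ldot (f x y) (W x y) = 0 /\
  ldot (f x y) (Pdx W x y) = 0 /\ ldot (f x y) (Pdy W x y) = 0 /\
  (forall v, in_central_span W x y v <-> ldot (f x y) v = 0).
Proof.
  intro Uxy; split; [| split; [| split]].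
  - exact (ldot_f_W x y Uxy).
  - exact (ldot_f_Pdx_W x y Uxy).
  - exact (ldot_f_Pdy_W x y Uxy).
  - exact (central_span_orth x y Uxy).
Qed.
End NullGaussMap.

Lemma conformal_spacelike_immersion_S41_sub U U' f : subset2 U' U ->
  conformal_spacelike_immersion_S41 U f -> conformal_spacelike_immersion_S41 U' f.
Proof.
  intros sub (f_smooth & f_conformal); split.
  - exact (smooth_on_sub U U' f sub f_smooth).
  - intros x y U'xy; exact (f_conformal x y (sub x y U'xy)).
Qed.

Lemma normal_frame_sub U U' f N1 N2 : subset2 U' U ->
  normal_frame U f N1 N2 -> normal_frame U' f N1 N2.
Proof.
  intros sub (N1_smooth & N2_smooth & N_orth); split; [| split].
  - exact (smooth_on_sub U U' N1 sub N1_smooth).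
  - exact (smooth_on_sub U U' N2 sub N2_smooth).
  - intros x y U'xy; exact (N_orth x y (sub x y U'xy)).
Qed.

Theorem mainTheorem4
  (U : R -> R -> Prop) (f N1 N2 H : R -> R -> V5) (h : R -> R -> R) :
  open2 U ->
  conformal_spacelike_immersion_S41 U f ->
  normal_frame U f N1 N2 ->
  is_mean_curvature U f H ->
  (forall x y, U x y -> ldot (H x y) (H x y) = 0) ->
  (forall x y, U x y -> H x y = vscal (h x y) (vadd (N1 x y) (N2 x y))) ->
  non_isotropic U f ->
  forall (U' : R -> R -> Prop) (W : R -> R -> V5),
    open2 U' -> subset2 U' U ->
    local_lift_of_null_gauss U' N1 N2 W ->
    forall x y, U' x y ->
      ldot (f x y) (W x y) = 0 /\
      ldot (f x y) (Pdx W x y) = 0 /\ ldot (f x y) (Pdy W x y) = 0 /\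
      (forall v : V5, in_central_span W x y v <-> ldot (f x y) v = 0).
Proof.
  (* <H, H> = 0 is implied by H = h (N1 + N2). *)
  intros _ f_immersion N_frame f_mean_curvature _ H_null_normal f_non_isotropic
    U' W U'_open U'_U W_lift.
  apply (null_gauss_envelope U' f N1 N2 H W h U'_open).
  - exact (conformal_spacelike_immersion_S41_sub U U' f U'_U f_immersion).
  - exact (normal_frame_sub U U' f N1 N2 U'_U N_frame).
  - intros x y U'xy; exact (f_mean_curvature x y (U'_U x y U'xy)).
  - intros x y U'xy; exact (H_null_normal x y (U'_U x y U'xy)).
  - intros x y U'xy; exact (f_non_isotropic x y (U'_U x y U'xy)).
  - exact W_lift.
Qed.
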